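(* Write $\mathbb{R}^4=\mathbb{R}^3\times\mathbb{R}$ and for $S\in SO(3)$ let $\Sigma_S$ be the linear map $(\mathbf{x},x^4)\mapsto(S\mathbf{x},x^4)$; let $SO_4(3)=\{\Sigma_S:S\in SO(3)\}$. An additive subgroup $\Lambda$ of $\mathbb{R}^4$ satisfies $\Sigma_S(\Lambda)\subseteq\Lambda$ for all $S\in SO(3)$ if and only if $\Lambda=\{\mathbf{0}\}\times H$ or $\Lambda=\mathbb{R}^3\times H$ for some additive subgroup $H$ of $\mathbb{R}$. *)

From HB Require Import structures.
From mathcomp Require Import all_boot all_order all_algebra.
From mathcomp Require Import reals.
Set Implicit Arguments. Unset Strict Implicit. Unset Printing Implicit Defensive.
Import Order.TTheory GRing.Theory Num.Theory.
Local Open Scope ring_scope.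

Definition add_subgroup (V : zmodType) (A : V -> Prop) : Prop :=
  A 0 /\ (forall x y, A x -> A y -> A (x - y)).

Definition SO3 (R : numDomainType) (S : 'M[R]_3) : Prop :=
  S^T *m S = 1%:M /\ \det S = 1.

Definition Sigma (R : numDomainType) (S : 'M[R]_3) (v : 'cV[R]_3 * R)
  : 'cV[R]_3 * R := (S *m v.1, v.2).

(** The difference of a point of [Lam] and its image under [Sigma_S] lies in
    the slice [L0 = {y | (y, 0) \in Lam}], which is itself [SO(3)]-stable.
    If some point of [Lam] has a nonzero [R^3]-component [x], suitable sign
    matrices give a nonzero multiple [d e_0] of the first basis vector in [L0];
    adding the images of [d e_0] under the rotations of angle [+-theta] about
    the third axis gives [2 d cos theta e_0], so by the archimedean property
    every multiple of [e_0], hence (permuting coordinates) every vector, lies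
    in [L0].  Then [Lam = R^3 x H]; otherwise [Lam = {0} x H], where
    [H = {t | (0, t) \in Lam}]. *)
From HB Require Import structures.
From mathcomp Require Import all_boot all_order all_algebra.
From mathcomp Require Import reals ring lra.
From Stdlib Require Import Classical.
Import Order.TTheory GRing.Theory Num.Theory.
Local Open Scope ring_scope.
Set Implicit Arguments. Unset Strict Implicit.

Section AddSubgroup.
Variables (V : zmodType) (A : V -> Prop).
Hypothesis subA : add_subgroup A.

Lemma add_subgroupN x : A x -> A (- x).
Proof. by case: subA => A0 AB Ax; rewrite -sub0r; apply: AB. Qed.

Lemma add_subgroupD x y : A x -> A y -> A (x + y).
Proof. by case: subA => _ AB Ax Ay; rewrite -[y]opprK; apply/AB/add_subgroupN. Qed.

Lemma add_subgroupMn x n : A x -> A (x *+ n).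
Proof.
move=> Ax; elim: n => [|n IHn]; first by rewrite mulr0n; case: subA.
by rewrite mulrS; apply: add_subgroupD.
Qed.

End AddSubgroup.

Section ProductSlices.
Variables (U V : zmodType) (A : U * V -> Prop).
Hypothesis subA : add_subgroup A.

Lemma pairB (u u' : U) (v v' : V) : (u, v) - (u', v') = (u - u', v - v') :> U * V.
Proof. by []. Qed.

Lemma add_subgroup_fst_slice : add_subgroup (fun u => A (u, 0)).
Proof.
case: subA => A0 AB; split=> // u u' Au Au'.
by have := AB _ _ Au Au'; rewrite pairB subrr.
Qed.

Lemma add_subgroup_snd_slice : add_subgroup (fun v => A (0, v)).
Proof.
case: subA => A0 AB; split=> // v v' Av Av'.
by have := AB _ _ Av Av'; rewrite pairB subrr.
Qed.

Lemma add_subgroup_displacement (f : U -> U) u v :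
  (forall w, A w -> A (f w.1, w.2)) -> A (u, v) -> A (f u - u, 0).
Proof.
case: subA => _ AB Af Auv.
by have := AB _ _ (Af _ Auv) Auv; rewrite pairB subrr.
Qed.

Lemma add_subgroup_snd_sliceP :
  (forall u, A (u, 0)) -> forall w, A w <-> A (0, w.2).
Proof.
case: subA => _ AB Afst [u v] /=; split=> Aw.
  by have := AB _ _ Aw (Afst u); rewrite pairB subrr subr0.
have := AB _ _ Aw (Afst (- u)).
by rewrite pairB sub0r opprK subr0.
Qed.

End ProductSlices.

Section ThreeSpace.
Context {R : numDomainType}.

Definition col3 (a b c : R) : 'cV[R]_3 := \col_(i < 3) [:: a; b; c]`_i.
Definition mx3 (rows : seq (seq R)) : 'M[R]_3 :=
  \matrix_(i < 3, j < 3) (nth [::] rows i)`_j.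

Definition diag3 (a b c : R) := mx3 [:: [:: a; 0; 0]; [:: 0; b; 0]; [:: 0; 0; c]].
Definition cycle3 := mx3 [:: [:: 0; 0; 1]; [:: 1; 0; 0]; [:: 0; 1; 0]].
Definition rot3 (c s : R) := mx3 [:: [:: c; -s; 0]; [:: s; c; 0]; [:: 0; 0; 1]].

Ltac mx3_entrywise :=
  apply/matrixP; case=> [[|[|[|i]]] Hi]; case=> [[|[|[|j]]] Hj];
  rewrite ?mxE ?big_ord_recl ?big_ord0 ?mxE //=.

Lemma col3E (y : 'cV[R]_3) : y = col3 (y 0 0) (y 1 0) (y 2 0).
Proof. by mx3_entrywise; congr (y _ _); apply: val_inj. Qed.

Lemma col30 : col3 0 0 0 = 0.
Proof. by mx3_entrywise. Qed.

Lemma col3D a b c a' b' c' :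
  col3 a b c + col3 a' b' c' = col3 (a + a') (b + b') (c + c').
Proof. by mx3_entrywise. Qed.

Lemma col3Mn a b c n : col3 a b c *+ n = col3 (a *+ n) (b *+ n) (c *+ n).
Proof. by apply/matrixP=> i j; rewrite mulmxnE !mxE; case: i => [[|[|[|]]]]. Qed.

Lemma col3_eq0 a b c : (col3 a b c == 0) = [&& a == 0, b == 0 & c == 0].
Proof.
apply/eqP/and3P => [/matrixP E | [/eqP-> /eqP-> /eqP->]]; last exact: col30.
by split; apply/eqP; [move: (E 0 0) | move: (E 1 0) | move: (E 2 0)];
  rewrite !mxE.
Qed.

Lemma mul_cycle3 a b c : cycle3 *m col3 a b c = col3 c a b.
Proof. by mx3_entrywise; ring. Qed.

Lemma mul_diag3 a b c x y z :
  diag3 a b c *m col3 x y z = col3 (a * x) (b * y) (c * z).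
Proof. by mx3_entrywise; ring. Qed.

Lemma mul_rot3 c s d : rot3 c s *m col3 d 0 0 = col3 (c * d) (s * d) 0.
Proof. by mx3_entrywise; ring. Qed.

Lemma det_mx3 (A : 'M[R]_3) : \det A =
  A 0 0 * (A 1 1 * A 2 2 - A 1 2 * A 2 1)
  - A 0 1 * (A 1 0 * A 2 2 - A 1 2 * A 2 0)
  + A 0 2 * (A 1 0 * A 2 1 - A 1 1 * A 2 0).
Proof.
rewrite (expand_det_row _ ord0) !big_ord_recl big_ord0 /cofactor.
rewrite !(expand_det_row _ ord0) !big_ord_recl !big_ord0 /cofactor !det_mx11 !mxE.
(* Index the entries by [nat] so that [/=] normalises the lifted ordinals. *)
have [f E] : exists f : nat -> nat -> R, forall i j, A i j = f i j.
  by exists (fun i j => A (inord i) (inord j)) => i j; rewrite !inord_val.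
by rewrite !E /= !expr0 !expr1; ring.
Qed.

Lemma SO3M (S T : 'M[R]_3) : SO3 S -> SO3 T -> SO3 (S *m T).
Proof.
move=> [StS detS] [TtT detT]; split; last by rewrite det_mulmx detS detT mulr1.
by rewrite trmx_mul mulmxA -(mulmxA T^T) StS mulmx1 TtT.
Qed.

Lemma SO3_cycle3 : SO3 cycle3.
Proof. by split; [mx3_entrywise; ring | rewrite det_mx3 !mxE /=; ring]. Qed.

Lemma SO3_diag3 a b c :
  a ^+ 2 = 1 -> b ^+ 2 = 1 -> c ^+ 2 = 1 -> a * b * c = 1 -> SO3 (diag3 a b c).
Proof.
move=> a2 b2 c2 abc; split; last by rewrite det_mx3 !mxE /= -[in RHS]abc; ring.
by mx3_entrywise; rewrite ?mulr0 ?mul0r ?addr0 ?add0r -?expr2.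
Qed.

Lemma SO3_rot3 c s : c ^+ 2 + s ^+ 2 = 1 -> SO3 (rot3 c s).
Proof.
move=> cs; split; last by rewrite det_mx3 !mxE /= -[in RHS]cs; ring.
by mx3_entrywise; rewrite ?mulr1n ?mulr0n; first [ring | rewrite -cs; ring].
Qed.

Lemma half_turn_displacements (v : 'cV[R]_3) :
  (diag3 (-1) 1 (-1) *m v - v) + (diag3 (-1) (-1) 1 *m v - v)
    - (diag3 1 (-1) (-1) *m v - v) = col3 (-4 * v 0 0) 0 0.
Proof. by rewrite [v]col3E !mul_diag3 !mxE; mx3_entrywise; ring. Qed.

End ThreeSpace.

Section SO3StableSubgroup.
Variables (R : archiRcfType) (L : 'cV[R]_3 -> Prop).
Hypotheses (subL : add_subgroup L)
  (stableL : forall S, SO3 S -> forall y, L y -> L (S *m y)).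

Lemma SO3_stable_axis d : d != 0 -> L (col3 d 0 0) -> forall u, L (col3 u 0 0).
Proof.
move=> d0 Ld u.
pose n := Num.bound `|u / (2 * d)|.
have un : `|u / (2 * d)| < n%:R by apply: archi_boundP.
have n0 : n%:R != 0 :> R by rewrite gt_eqF // (le_lt_trans _ un).
pose c := u / (2 * d) / n%:R.
have c_lt1 : `|c| < 1 by rewrite /c normrM normfV normr_nat ltr_pdivrMr ?mul1r.
have c2_le1 : 0 <= 1 - c ^+ 2.
  by move: c_lt1; rewrite ltr_norml => /andP[? ?]; nra.
pose s := Num.sqrt (1 - c ^+ 2).
have cs : c ^+ 2 + s ^+ 2 = 1 by rewrite sqr_sqrtr //; ring.
have cNs : c ^+ 2 + (- s) ^+ 2 = 1 by rewrite sqrrN.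
have L2cd : L (col3 (2 * c * d) 0 0).
  suff -> : col3 (2 * c * d) 0 0 = rot3 c s *m col3 d 0 0 + rot3 c (- s) *m col3 d 0 0.
    by apply: (add_subgroupD subL); apply: stableL Ld; apply: SO3_rot3.
  by rewrite !mul_rot3 col3D; congr col3; ring.
have := add_subgroupMn subL n L2cd; rewrite col3Mn !mul0rn.
congr (L (col3 _ 0 0)); rewrite -mulr_natr /c; field.
by rewrite n0 d0.
Qed.

Lemma SO3_stable_full_of_axis : (forall u, L (col3 u 0 0)) -> forall y, L y.
Proof.
move=> Laxis y; rewrite [y]col3E.
have L2 := stableL SO3_cycle3 (Laxis (y 1 0)).
have L3 := stableL SO3_cycle3 (stableL SO3_cycle3 (Laxis (y 2 0))).
rewrite !mul_cycle3 in L2 L3.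
by have := add_subgroupD subL (add_subgroupD subL (Laxis (y 0 0)) L2) L3;
  rewrite !col3D !addr0 !add0r.
Qed.

Definition SO3_displacements_in (x : 'cV[R]_3) :=
  forall S, SO3 S -> L (S *m x - x).

Lemma SO3_displacements_inM P x :
  SO3 P -> SO3_displacements_in x -> SO3_displacements_in (P *m x).
Proof.
move=> SO3P Lx S SO3S.
have := add_subgroupD subL (Lx _ (SO3M SO3S SO3P)) (add_subgroupN subL (Lx _ SO3P)).
by rewrite mulmxA opprB addrA subrK.
Qed.

Lemma SO3_displacements_full x :
  x != 0 -> SO3_displacements_in x -> forall y, L y.
Proof.
move=> x0 Lx; apply: SO3_stable_full_of_axis.
(* Cycling the coordinates moves a nonzero coordinate of [x] to the front. *)
have [x' [x'0 Lx']] : exists x' : 'cV[R]_3, x' 0 0 != 0 /\ SO3_displacements_in x'.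
  case: (eqVneq (x 0 0) 0) => [x00 | ]; last by exists x.
  case: (eqVneq (x 2 0) 0) => [x20 | x20].
    exists (cycle3 *m (cycle3 *m x)).
    split; last by do 2!apply: SO3_displacements_inM SO3_cycle3 _.
    move: x0; rewrite [x]col3E col3_eq0 !mul_cycle3 x00 x20 !eqxx !mxE /=.
    by rewrite andbT.
  exists (cycle3 *m x); split; last exact: SO3_displacements_inM SO3_cycle3 _.
  by rewrite [x]col3E mul_cycle3 mxE.
have n4 : (-4 : R) != 0 by rewrite oppr_eq0 pnatr_eq0.
apply: (@SO3_stable_axis (-4 * x' 0 0)); first by rewrite mulf_neq0.
rewrite -half_turn_displacements.
apply: (add_subgroupD subL);
  [apply: (add_subgroupD subL) | apply: (add_subgroupN subL)];
  by apply: Lx'; apply: SO3_diag3; rewrite ?sqrrN ?expr1n //; ring.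
Qed.

End SO3StableSubgroup.

Theorem proposition3p2 (R : realType) (Lam : 'cV[R]_3 * R -> Prop) :
  add_subgroup Lam ->
  ((forall S : 'M[R]_3, SO3 S -> forall v, Lam v -> Lam (Sigma S v)) <->
   exists H : R -> Prop, add_subgroup H /\
     ((forall v, Lam v <-> (v.1 = 0 /\ H v.2)) \/
      (forall v, Lam v <-> H v.2))).
Proof.
move=> subLam; split; last first.
  move=> [H [_ [LamE | LamE]]] S _ v /LamE.
    by case=> v10 Hv2; apply/LamE; rewrite /Sigma /= v10 mulmx0.
  by move=> Hv2; apply/LamE.
move=> stable; exists (fun t => Lam (0, t)).
split; first exact: add_subgroup_snd_slice.
have subL0 := add_subgroup_fst_slice subLam.
have stableL0 S : SO3 S -> forall y, Lam (y, 0) -> Lam (S *m y, 0).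
  by move=> SO3S y /(stable _ SO3S).
case: (classic (exists v, Lam v /\ v.1 <> 0)) => [[[x t] [Lxt /eqP x0]] | noL].
  right; apply: (add_subgroup_snd_sliceP subLam) => y.
  apply: (SO3_displacements_full subL0 stableL0 x0) => S SO3S.
  exact: add_subgroup_displacement subLam _ _ _ (stable _ SO3S) Lxt.
left=> -[y t] /=; split=> [Lyt | [-> //]].
suff y0 : y = 0 by move: Lyt; rewrite y0.
by apply: NNPP => y0; apply: noL; exists (y, t).
Qed.
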